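(* Let $t\ge1$ and $D\ge1$ be integers. Let $X,Y$ be a section-pair having $3t$ pairwise-interlacing chords whose lengths all belong to an interval of size $D$. Then there are paths $P_1,\dots,P_t$ in $H(X,Y)$ between $x^{t}$ and $y^{t}$ such that $1\le |P_{i+1}|-|P_i|\le 2D$ for every $1\le i\le t-1$. In particular $|P_t|\ge |P_1|+t-1$.
   Context: A section-pair in a graph $G$ is a pair $X,Y$ of vertex-disjoint paths; the two endpoints of $X$ are designated its top $x^{t}$ and bottom $x^{b}$, and those of $Y$ its top $y^t$ and bottom $y^b$. For distinct $x_1,x_2\in X$, $x_1$ is above $x_2$ if $x_1$ is closer to $x^t$ along $X$ than $x_2$, otherwise below; similarly in $Y$. A chord is an edge of $G$ with one endpoint in $X$ and one in $Y$. $H(X,Y)$ is the graph with vertex set $V(X)\cup V(Y)$ whose edges are the edges of $X$, the edges of $Y$ and the chords. $|P|$ is the number of edges of a path $P$; $d_X(x_1,x_2)$ is the number of edges of the subpath of $X$ between $x_1,x_2$, similarly $d_Y$. The length of a chord $(x,y)$, $x\in X,y\in Y$, is $d_X(x^t,x)+d_Y(y^t,y)$. Two chords $(x_1,y_1),(x_2,y_2)$ with no common vertex are parallel if for some $i\in\{1,2\}$, $x_i$ is above $x_{3-i}$ and $y_i$ is above $y_{3-i}$; otherwise they are interlacing. An interval is a set of consecutive integers; its size is its number of elements. *)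

From mathcomp Require Import all_boot.
Set Implicit Arguments. Unset Strict Implicit. Unset Printing Implicit Defensive.

Section Defs.
Variable T : finType.

Definition simple_graph (e : rel T) : Prop := symmetric e /\ irreflexive e.

Definition is_path (e : rel T) (p : seq T) : Prop :=
  match p with
  | [::] => False
  | a :: q => path e a q /\ uniq p
  end.

Definition plen (p : seq T) : nat := (size p).-1.

(* Section-pair: X, Y vertex-disjoint paths of G; the top of X is the head of
   the sequence X, its bottom is the last element (similarly for Y). *)
Definition section_pair (e : rel T) (X Y : seq T) : Prop :=
  is_path e X /\ is_path e Y /\ [disjoint X & Y].

Definition chord (e : rel T) (X Y : seq T) (c : T * T) : bool :=
  [&& c.1 \in X, c.2 \in Y & e c.1 c.2].

(* Length of a chord: d_X(x^t, x) + d_Y(y^t, y) (positions along the paths). *)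
Definition chord_length (X Y : seq T) (c : T * T) : nat :=
  index c.1 X + index c.2 Y.

Definition interlacing (X Y : seq T) (c d : T * T) : bool :=
  [&& c.1 != d.1, c.2 != d.2,
      ~~ ((index c.1 X < index d.1 X) && (index c.2 Y < index d.2 Y)) &
      ~~ ((index d.1 X < index c.1 X) && (index d.2 Y < index c.2 Y))].

Definition consecutive (S : seq T) (u v : T) : bool :=
  [&& u \in S, v \in S &
      (index v S == (index u S).+1) || (index u S == (index v S).+1)].

Definition H_edge (e : rel T) (X Y : seq T) (u v : T) : bool :=
  [|| consecutive X u v, consecutive Y u v,
      [&& u \in X, v \in Y & e u v] | [&& v \in X, u \in Y & e u v]].

Definition H_path_between (e : rel T) (X Y : seq T) (a b : T) (P : seq T) : Prop :=
  is_path (H_edge e X Y) P /\ all (fun v => v \in X ++ Y) P /\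
  head a P = a /\ last a P = b.

End Defs.

From mathcomp Require Import all_boot ssralg ssrnum ssrint zify.
Set Implicit Arguments. Unset Strict Implicit. Unset Printing Implicit Defensive.

(* Lemma 4.4.  Sort the 3t pairwise interlacing chords by their position on X;
   their positions on Y then decrease ("crossing order").  An odd subsequence
   s = (d_1, ..., d_(2m+1)) of chords yields a zigzag path of H(X,Y): down X
   from x^t to d_1, across d_1, up Y to d_2, across d_2, down X to d_3, ...,
   across d_(2m+1) and up Y to y^t.  Its length is
       zlen s = |s| + l(d_1) - l(d_2) + l(d_3) - ... + l(d_(2m+1)),
   where l is the chord length. *)

Lemma odd_seq_ind (A : Type) (P : seq A -> Prop) :
  (forall x, P [:: x]) ->
  (forall x y r, odd (size r) -> P r -> P [:: x, y & r]) ->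
  forall s, odd (size s) -> P s.
Proof.
move=> P1 P2 s.
suff [] : (odd (size s) -> P s) /\ (forall x, odd (size (x :: s)) -> P (x :: s)) by [].
elim: s => [|y r [IH1 IH2]]; first by split=> // x _; exact: P1.
by split=> [|x /=]; [exact: IH2 | rewrite negbK => Hr; exact: P2 Hr (IH1 Hr)].
Qed.

Lemma subseq_cat_split (A : eqType) (s L1 L2 : seq A) : subseq s (L1 ++ L2) ->
  exists s1 s2, [/\ s = s1 ++ s2, subseq s1 L1 & subseq s2 L2].
Proof.
move=> /subseqP [m Hm ->]; rewrite size_cat in Hm.
exists (mask (take (size L1) m) L1), (mask (drop (size L1) m) L2).
by rewrite -mask_cat ?cat_take_drop ?mask_subseq // size_takel // Hm leq_addr.
Qed.

Section ZigzagValues.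
Variables (A : eqType) (l : A -> nat).

Fixpoint altsum (s : seq A) : int := if s is x :: r then ((l x)%:Z - altsum r)%R else 0%R.

(* The zigzag value |s| + altsum s; for chords in crossing order it is the
   length of the zigzag path through them. *)
Definition zlen (s : seq A) : int := ((size s)%:Z + altsum s)%R.

Lemma altsum_cat s1 s2 : altsum (s1 ++ s2) =
  (altsum s1 + (if odd (size s1) then - altsum s2 else altsum s2))%R.
Proof.
by elim: s1 => [|x s1 IH] /=; [rewrite GRing.add0r | rewrite IH; case: odd => /=; lia].
Qed.

Lemma zlen1 x : zlen [:: x] = ((l x)%:Z + 1)%R.
Proof. rewrite /zlen /=; lia. Qed.

Lemma zlen_cons2 x y r : zlen [:: x, y & r] = (zlen r + 2 + (l x)%:Z - (l y)%:Z)%R.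
Proof. rewrite /zlen /=; lia. Qed.

Definition steep x y := (l y).+2 <= l x.

Lemma steep_trans : transitive steep.
Proof. rewrite /steep => y x z; lia. Qed.

Lemma split_descent (L : seq A) : 1 < size L -> exists L1 x y L2,
  [/\ L = L1 ++ [:: x, y & L2], L1 = [::] \/ l x <= (l y).+1 & path steep y L2].
Proof.
elim: L => [|z [|x [|y L]] IH] //= _.
  by exists [::], z, x, [::]; split=> //; left.
have [L1 [x1 [y1 [L2 [E [E1 | Hup] Hp]]]]] := IH isT; last first.
  by exists (z :: L1), x1, y1, L2; rewrite E; split=> //; right.
move: E; rewrite E1 => -[Ex Ey EL]; subst x1 y1 L2; case: (leqP (l x) (l y).+1) => Hxy.
  by exists [:: z], x, y, L; split=> //; right.
by exists [::], z, x, (y :: L); split=> //=; [left | rewrite Hp andbT].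
Qed.

Lemma shrink_by_two (L : seq A) : 1 < size L -> exists2 L',
  subseq L' L /\ (size L').+2 = size L &
  forall s', subseq s' L' -> odd (size s') ->
    exists2 s, subseq s L && odd (size s) & (zlen s' < zlen s)%R.
Proof.
move=> /split_descent [L1 [x [y [L2 [-> Hup Hp]]]]].
exists (L1 ++ L2).
  split; last by rewrite !size_cat /= !addnS.
  apply: cat_subseq (subseq_refl _) _.
  exact: subseq_trans (subseq_cons _ _) (subseq_cons _ _).
move=> s' /subseq_cat_split [s1 [s2 [-> H1 H2]]] Hodd.
case Eo: (odd (size s1)).
  (* insert x, y after s1: they enter the alternating sum as - l x + l y *)
  case: Hup => [E|Hup]; first by move: H1 Eo; rewrite E subseq0 => /eqP ->.
  have Hs : subseq (s1 ++ [:: x, y & s2]) (L1 ++ [:: x, y & L2]).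
    by rewrite cat_subseq //= !eqxx.
  exists (s1 ++ [:: x, y & s2]).
    by rewrite Hs /=; move: Hodd; rewrite !size_cat /= !addnS /= negbK.
  rewrite /zlen !altsum_cat Eo !size_cat /= !addnS; lia.
(* otherwise s2 = z :: s2' with z steeply below y: replace z by y *)
case: s2 H2 Hodd => [|z s2] H2 Hodd; first by move: Hodd; rewrite cats0 Eo.
have zL2 : z \in L2 by apply: (mem_subseq H2); rewrite mem_head.
have /allP /(_ z zL2) Hyz := order_path_min steep_trans Hp.
have Hs : subseq (s1 ++ y :: s2) (L1 ++ [:: x, y & L2]).
  rewrite cat_subseq ?(subseq_trans _ (subseq_cons _ x)) //=.
  by rewrite eqxx (cons_subseq H2).
exists (s1 ++ y :: s2); first by rewrite Hs; move: Hodd; rewrite !size_cat.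
rewrite /zlen !altsum_cat Eo !size_cat /=; move: Hyz; rewrite /steep; lia.
Qed.


Section Window.
Variables a D : nat.

Definition in_window x := a <= l x < a + D.

(* Gap property: a level v >= a + 1 below zlen s is exceeded by the zlen of
   some odd suffix of s by at most D + 1, since consecutive odd suffixes
   differ by less than D + 2 and the last one has zlen <= a + D. *)
Lemma gap_suffix (v : int) s : odd (size s) -> all in_window s ->
  (a%:Z + 1 <= v)%R -> (v < zlen s)%R ->
  exists2 s', subseq s' s && odd (size s') & (v < zlen s' <= v + D%:Z + 1)%R.
Proof.
move: s; apply: odd_seq_ind => [x | x y r Hr IH].
  move=> /andP [/andP Hx _] Hv; rewrite zlen1 => Hlt.
  by exists [:: x]; rewrite ?subseq_refl ?zlen1 //; lia.
move=> /and3P [/andP Hx /andP Hy Hwin] Hv Hlt.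
case: (boolP (v < zlen r)%R) => Hvr.
  have [s' /andP [Hs' Ho'] Hz] := IH Hwin Hv Hvr.
  exists s' => //; rewrite Ho' (subseq_trans Hs') //.
  exact: subseq_trans (subseq_cons _ y) (subseq_cons _ x).
exists [:: x, y & r]; rewrite ?subseq_refl /= ?negbK //.
by move: Hlt Hvr; rewrite zlen_cons2; lia.
Qed.

Definition good L s := [&& subseq s L, odd (size s) & (a%:Z + 1 <= zlen s)%R].

Definition step s s' := (zlen s + 1 <= zlen s' <= zlen s + D%:Z + 1)%R.

Lemma good_subseq L L' s : subseq L' L -> good L' s -> good L s.
Proof. by move=> HL /and3P [Hs Ho Ha]; rewrite /good (subseq_trans Hs HL) Ho Ha. Qed.

Lemma climb L s s0 : all in_window L -> subseq s L -> odd (size s) ->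
  good L s0 -> (zlen s0 < zlen s)%R ->
  exists ch, [/\ ch != [::], path step s0 ch & all (good L) ch].
Proof.
move=> HL Hs Hos.
have HsW : all in_window s by apply/allP => x /(mem_subseq Hs) /(allP HL).
move: {2}`|zlen s - zlen s0|%N (leqnn `|zlen s - zlen s0|%N) => n.
elim: n s0 => [|n IH] s0 Hn /and3P [_ _ Ha0] Hlt; first lia.
have [s1 /andP [Hs1 Ho1] Hz1] := gap_suffix Hos HsW Ha0 Hlt.
have Hg1 : good L s1 by rewrite /good (subseq_trans Hs1 Hs) Ho1 /=; lia.
have Hstep : step s0 s1 by rewrite /step; lia.
case: (boolP (zlen s1 < zlen s)%R) => Hlt1; last by exists [:: s1]; rewrite /= Hstep Hg1.
have [ch [_ Hp Hg]] := IH s1 ltac:(lia) Hg1 Hlt1.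
by exists (s1 :: ch); rewrite /= Hstep Hp Hg1 Hg.
Qed.

(* The combinatorial core: a nonempty list in the window admits a chain of
   good subsequences with admissible steps, of length at least
   (size L - 2) / 2.  Induction on size L: shrink L by two entries, take the
   chain of the shrunk list, and climb from its last member, which is
   strictly beaten by an odd subsequence of L, in at least one more step. *)
Lemma long_chain L : all in_window L -> L != [::] -> exists s0 ch,
  [/\ good L s0, path step s0 ch, all (good L) ch & size L <= (size ch).*2.+2].
Proof.
move: {2}(size L) (leqnn (size L)) => n; elim: n L => [|n IH] L.
  by rewrite leqn0 => /eqP /size0nil ->.
move=> Hn HL Hne; case: (leqP (size L) 2) => Hs.
  case: L Hne HL {Hn} Hs => [|x L] // _ /andP [/andP [Hx _] _] Hs.
  exists [:: x], [::]; split=> //.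
  by rewrite /good sub1seq mem_head zlen1 /=; lia.
have [L' [HL' HsL'] Hbeat] := shrink_by_two (ltnW Hs).
have HL'W : all in_window L' by apply/allP => x /(mem_subseq HL') /(allP HL).
have HL'ne : L' != [::] by apply/eqP => E; move: HsL' Hs; rewrite E => <-.
have [s0 [ch [Hg0 Hp Hg Hsz]]] := IH L' ltac:(lia) HL'W HL'ne.
have /and3P [Htop Hotop Hatop] : good L' (last s0 ch).
  by case: ch Hp Hg {Hsz} => [|x ch] // _ Hg; apply: (allP Hg); exact: (mem_last x ch).
have [s /andP [Hs' Hos] Hlt] := Hbeat _ Htop Hotop.
have Hgtop : good L (last s0 ch) by rewrite /good (subseq_trans Htop HL') Hotop.
have [ch2 [Hne2 Hp2 Hg2]] := climb HL Hs' Hos Hgtop Hlt.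
exists s0, (ch ++ ch2); split.
- exact: good_subseq Hg0.
- by rewrite cat_path Hp.
- by rewrite all_cat Hg2 andbT; apply: sub_all Hg => x; apply: good_subseq.
- move: Hsz HsL'; case: ch2 Hne2 {Hp2 Hg2} => // x ch2 _.
  by rewrite size_cat doubleD /= -!addnn; clear; lia.
Qed.

End Window.
End ZigzagValues.

Lemma sorted_iota_succ (R : rel nat) m n :
  (forall k, m <= k -> k.+1 < m + n -> R k k.+1) -> sorted R (iota m n).
Proof.
elim: n m => [|n IH] m // H; case: n IH H => [|n] IH H //=.
rewrite H ?addnS ?ltnS ?leq_addr //=; apply: IH => k Hk Hkn; apply: H; lia.
Qed.

Lemma last_map_iota (B : Type) (f : nat -> B) (u0 : B) m n :
  last u0 [seq f k | k <- iota m n.+1] = f (m + n).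
Proof. by rewrite -addn1 iotaD map_cat last_cat. Qed.

Lemma sorted_cat_link (B : Type) (r : rel B) (u0 : B) p1 p2 :
  sorted r p1 -> sorted r p2 -> r (last u0 p1) (head u0 p2) -> sorted r (p1 ++ p2).
Proof.
case: p1 => [//|x p1] /= H1; rewrite cat_path H1.
by case: p2 => [//|y p2] /= -> ->.
Qed.

Lemma sorted_strict (B : eqType) (le lt : rel B) s : uniq s ->
  {in s &, forall p q, p != q -> le p q -> lt p q} -> sorted le s -> sorted lt s.
Proof.
case: s => [//|x s]; elim: s x => [//|y s IH] x /= /andP [Hx Hu] H /andP [Hxy Hp].
rewrite H ?inE ?eqxx ?orbT //; last by apply: contraNneq Hx => ->; rewrite mem_head.
by apply: IH Hp => // p q Hp' Hq'; apply: H; rewrite inE ?Hp' ?Hq' orbT.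
Qed.

Section ZigzagIndices.
(* Vertices of the section-pair are encoded as (true, k) for the k-th vertex
   of X and (false, k) for the k-th vertex of Y; a chord c joins the
   X-index px c to the Y-index py c. *)
Variables (A : eqType) (px py : A -> nat).

Definition runX i j : seq (bool * nat) := [seq (true, k) | k <- iota i (j - i).+1].
Definition runY j i : seq (bool * nat) := [seq (false, j - k) | k <- iota 0 (j - i).+1].

Lemma size_runX i j : size (runX i j) = (j - i).+1.
Proof. by rewrite size_map size_iota. Qed.

Lemma size_runY i j : size (runY j i) = (j - i).+1.
Proof. by rewrite size_map size_iota. Qed.

Lemma mem_runX i j u : i <= j -> (u \in runX i j) = u.1 && (i <= u.2 <= j).
Proof.
case: u => b k /= Hij; apply/mapP/andP => [[m] | [Hb Hk]].
  by rewrite mem_iota => Hm [-> ->]; split=> //; lia.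
by exists k; [rewrite mem_iota; lia | case: b Hb].
Qed.

Lemma mem_runY i j u : i <= j -> (u \in runY j i) = ~~ u.1 && (i <= u.2 <= j).
Proof.
case: u => b k /= Hij; apply/mapP/andP => [[m] | [Hb Hk]].
  by rewrite mem_iota => Hm [-> ->]; split=> //; lia.
by exists (j - k); [rewrite mem_iota; lia | case: b Hb => //= _; congr pair; lia].
Qed.

Lemma uniq_runX i j : uniq (runX i j).
Proof. by rewrite map_inj_uniq ?iota_uniq // => ? ? []. Qed.

Lemma uniq_runY i j : uniq (runY j i).
Proof.
rewrite map_inj_in_uniq ?iota_uniq // => k k'.
by rewrite !mem_iota => Hk Hk' [E]; lia.
Qed.

Lemma last_runX u0 i j : i <= j -> last u0 (runX i j) = (true, j).
Proof. by move=> Hij; rewrite last_map_iota subnKC. Qed.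

Lemma last_runY u0 i j : i <= j -> last u0 (runY j i) = (false, i).
Proof. by move=> Hij; rewrite last_map_iota add0n subKn. Qed.

Lemma sorted_runX (r : rel (bool * nat)) i j :
  (forall k, i <= k < j -> r (true, k) (true, k.+1)) -> sorted r (runX i j).
Proof. by move=> H; rewrite sorted_map; apply: sorted_iota_succ => k *; apply: H; lia. Qed.

Lemma sorted_runY (r : rel (bool * nat)) i j :
  (forall k, i <= k < j -> r (false, k.+1) (false, k)) -> sorted r (runY j i).
Proof.
move=> H; rewrite sorted_map; apply: sorted_iota_succ => k _ Hk /=.
by have := H (j - k.+1); rewrite -subSn; [rewrite subSS; apply; lia | lia].
Qed.

Fixpoint zigzag (x0 : nat) (s : seq A) : seq (bool * nat) :=
  match s with
  | [:: c, d & r] => runX x0 (px c) ++ runY (py c) (py d) ++ zigzag (px d) r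
  | [:: c] => runX x0 (px c) ++ runY (py c) 0
  | [::] => [::]
  end.

Definition cross c d := (px c < px d) && (py d < py c).

Lemma cross_trans : transitive cross.
Proof. by move=> d c e /andP [? ?] /andP [? ?]; apply/andP; split; lia. Qed.

Definition zz_ok x0 s := [&& odd (size s), sorted cross s & all (fun c => x0 <= px c) s].

Lemma zz_ind (P : nat -> seq A -> Prop) :
  (forall x0 c, x0 <= px c -> P x0 [:: c]) ->
  (forall x0 c d r, x0 <= px c -> cross c d -> all (cross d) r ->
     zz_ok (px d) r -> P (px d) r -> P x0 [:: c, d & r]) ->
  forall x0 s, zz_ok x0 s -> P x0 s.
Proof.
move=> P1 P2 x0 s /and3P [Hodd Hs Hx]; move: s Hodd x0 Hs Hx.
apply: odd_seq_ind => [c | c d r Hr IH] x0 /=; first by rewrite andbT => _; apply: P1.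
move=> /andP [Hcd Hp] /andP [Hc _].
have Hd := order_path_min cross_trans Hp.
have Hr' : zz_ok (px d) r.
  rewrite /zz_ok Hr (path_sorted Hp); apply: sub_all Hd => e /andP [? _]; exact: ltnW.
by apply: P2 => //; apply: IH; case/and3P: Hr'.
Qed.

Lemma zigzag1 x0 c : zigzag x0 [:: c] = runX x0 (px c) ++ runY (py c) 0.
Proof. by []. Qed.

Lemma zigzag2 x0 c d r :
  zigzag x0 [:: c, d & r] = runX x0 (px c) ++ runY (py c) (py d) ++ zigzag (px d) r.
Proof. by []. Qed.

Lemma zigzag_head u0 x0 s : s != [::] -> head u0 (zigzag x0 s) = (true, x0).
Proof. by case: s => [|c [|d s]]. Qed.

Lemma zigzag_last u0 x0 s : odd (size s) -> last u0 (zigzag x0 s) = (false, 0).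
Proof.
move=> Hs; move: s Hs x0 u0; apply: odd_seq_ind => [c | c d r _ IH] x0 u0.
  by rewrite zigzag1 last_cat last_runY.
by rewrite zigzag2 !last_cat IH.
Qed.

Lemma zigzag_size x0 s : zz_ok x0 s ->
  ((size (zigzag x0 s))%:Z + x0%:Z = zlen (fun c => px c + py c) s + 1)%R.
Proof.
move: x0 s; apply: zz_ind => [x0 c Hc | x0 c d r Hc /andP [_ Hcd] _ _ IH].
  by rewrite zigzag1 size_cat size_runX size_runY zlen1; lia.
by rewrite zigzag2 !size_cat size_runX size_runY zlen_cons2; move: IH; lia.
Qed.

Lemma zigzag_range x0 s : zz_ok x0 s -> {in zigzag x0 s, forall u,
  if u.1 then x0 <= u.2 else has (fun c => u.2 <= py c) s}.
Proof.
move: x0 s; apply: zz_ind => [x0 c Hc | x0 c d r Hc /andP [Hcd1 Hcd2] _ _ IH] [[] k];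
  rewrite ?zigzag1 ?zigzag2 !mem_cat ?mem_runX ?mem_runY ?(ltnW Hcd2) //=; try lia.
  by move=> /orP [| /IH /=]; lia.
move=> /orP [| /IH /hasP [e He Hke]]; first lia.
by apply/orP; right; apply/orP; right; apply/hasP; exists e.
Qed.

(* The zigzag never repeats an index pair: its runs along X move down, its
   runs along Y move up, and they lie in disjoint ranges by zigzag_range. *)
Lemma zigzag_uniq x0 s : zz_ok x0 s -> uniq (zigzag x0 s).
Proof.
move: x0 s; apply: zz_ind => [x0 c Hc | x0 c d r Hc /andP [Hcd1 Hcd2] Hdr Hok IH].
  rewrite zigzag1 cat_uniq uniq_runX uniq_runY andbT andTb; apply/hasPn => -[b k].
  by rewrite mem_runY // mem_runX //; case: b.
rewrite zigzag2 cat_uniq uniq_runX cat_uniq uniq_runY IH !andTb andbT; apply/andP; split.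
  apply/hasPn => -[b k]; rewrite mem_cat mem_runX // => /orP [| /(zigzag_range Hok)].
    by rewrite mem_runY ?(ltnW Hcd2) //; case: b.
  by case: b => //= Hk; lia.
apply/hasPn => -[b k] /(zigzag_range Hok); rewrite mem_runY ?(ltnW Hcd2) //.
case: b => //= /hasP [e He Hke]; have /andP [_ Hed] := allP Hdr e He; lia.
Qed.

Definition bounded nX nY c := (px c < nX) && (py c < nY).

Lemma zigzag_bounds nX nY x0 s : zz_ok x0 s -> all (bounded nX nY) s ->
  {in zigzag x0 s, forall u, if u.1 then u.2 < nX else u.2 < nY}.
Proof.
move: x0 s; apply: zz_ind => [x0 c Hc | x0 c d r Hc /andP [_ Hcd2] _ _ IH].
  move=> /andP [/andP [Hx Hy] _] [[] k];
    by rewrite zigzag1 mem_cat mem_runX ?mem_runY //=; lia.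
move=> /and3P [/andP [Hx Hy] _ Hb] [b k].
rewrite zigzag2 !mem_cat mem_runX // mem_runY ?(ltnW Hcd2) // => /or3P [| | /(IH Hb)];
  case: b => //=; lia.
Qed.

Lemma zigzag_sorted (adj : rel (bool * nat)) nX nY x0 s :
  (forall k, k.+1 < nX -> adj (true, k) (true, k.+1)) ->
  (forall k, k.+1 < nY -> adj (false, k.+1) (false, k)) ->
  zz_ok x0 s -> all (bounded nX nY) s ->
  {in s, forall c, adj (true, px c) (false, py c) && adj (false, py c) (true, px c)} ->
  sorted adj (zigzag x0 s).
Proof.
move=> hX hY; move: x0 s.
have runXs x0 c : x0 <= px c -> px c < nX -> sorted adj (runX x0 (px c)).
  by move=> ? ?; apply: sorted_runX => k ?; apply: hX; lia.
have runYs c i : py c < nY -> sorted adj (runY (py c) i).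
  by move=> ?; apply: sorted_runY => k ?; apply: hY; lia.
apply: zz_ind => [x0 c Hc | x0 c d r Hc /andP [_ Hcd2] _ Hok IH].
  move=> /andP [/andP [Hx Hy] _] /(_ c (mem_head _ _)) /andP [Hadj _].
  rewrite zigzag1; apply: (sorted_cat_link (u0 := (true, 0))); rewrite ?runXs ?runYs //.
  by rewrite last_runX // /= subn0.
move=> /and3P [/andP [Hx Hy] _ Hb] Hadj.
have /andP [Hc1 _] := Hadj c (mem_head _ _).
have /andP [_ Hd2] := Hadj d ltac:(by rewrite !inE eqxx orbT).
rewrite zigzag2; apply: (sorted_cat_link (u0 := (true, 0))); rewrite ?runXs //;
  last by rewrite last_runX // /= subn0.
apply: (sorted_cat_link (u0 := (true, 0))); rewrite ?runYs ?IH //.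
- by move=> e He; apply: Hadj; rewrite !inE He !orbT.
- rewrite last_runY ?(ltnW Hcd2) //.
  by rewrite zigzag_head //; apply: contraTneq Hok => ->.
Qed.

Lemma sort_crossing (I : finType) (c : I -> A) :
  (forall i j, i != j -> cross (c i) (c j) || cross (c j) (c i)) ->
  exists cs, [/\ sorted cross cs, size cs = #|I| & {subset cs <= codom c}].
Proof.
move=> Hc; have Hinj : injective c.
  move=> i j E; apply/eqP; apply: contraT => /Hc.
  by rewrite E /cross orbb ltnn.
exists (sort (relpre px leq) (codom c)); split.
- apply: (sorted_strict (le := relpre px leq)).
  + by rewrite sort_uniq (map_inj_uniq Hinj) enum_uniq.
  + move=> p q; rewrite !mem_sort => /codomP [i ->] /codomP [j ->] Hij /= Hle.
    have /Hc /orP [// | /andP [Hji _]] : i != j by apply: contraNneq Hij => ->.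
    by move: Hle; rewrite leqNgt Hji.
  + by apply: sort_sorted => p q; apply: leq_total.
- by rewrite size_sort size_codom.
- by move=> p; rewrite mem_sort.
Qed.

End ZigzagIndices.

Lemma is_path_sorted (T : finType) (r : rel T) p :
  p != [::] -> sorted r p -> uniq p -> is_path r p.
Proof. by case: p. Qed.

Lemma chain_spread (f : nat -> nat) t :
  (forall i, i.+1 < t -> f i < f i.+1) -> f 0 + t - 1 <= f t.-1.
Proof.
move=> Hf; have Hi : forall i, i < t -> f 0 + i <= f i.
  elim=> [|i IH] Hi; first by rewrite addn0.
  by have := IH (ltnW Hi); have := Hf i Hi; lia.
case: t Hf Hi => [|t] _ Hi /=; first lia.
by have := Hi t (ltnSn t); lia.
Qed.

Section ZigzagPaths.
Variables (T : finType) (e : rel T) (xt yt : T) (Xs Ys : seq T).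
Local Notation X := (xt :: Xs).
Local Notation Y := (yt :: Ys).
Hypotheses (e_sym : symmetric e) (uX : uniq X) (uY : uniq Y) (dXY : [disjoint X & Y]).

Definition vtx (u : bool * nat) : T := if u.1 then nth xt X u.2 else nth yt Y u.2.
Definition xpos (c : T * T) := index c.1 X.
Definition ypos (c : T * T) := index c.2 Y.

Lemma vtxX k : vtx (true, k) = nth xt X k. Proof. by []. Qed.
Lemma vtxY k : vtx (false, k) = nth yt Y k. Proof. by []. Qed.

Lemma H_edge_down_X k : k.+1 < size X -> H_edge e X Y (vtx (true, k)) (vtx (true, k.+1)).
Proof.
move=> Hk; rewrite !vtxX /H_edge /consecutive !mem_nth ?(ltnW Hk) //.
by rewrite !index_uniq ?(ltnW Hk) // eqxx.
Qed.

Lemma H_edge_up_Y k : k.+1 < size Y -> H_edge e X Y (vtx (false, k.+1)) (vtx (false, k)).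
Proof.
move=> Hk; rewrite !vtxY /H_edge /consecutive !mem_nth ?(ltnW Hk) //.
by rewrite !index_uniq ?(ltnW Hk) // eqxx !orbT.
Qed.

Lemma H_edge_chord c : chord e X Y c ->
  H_edge e X Y (vtx (true, xpos c)) (vtx (false, ypos c)) &&
  H_edge e X Y (vtx (false, ypos c)) (vtx (true, xpos c)).
Proof.
case/and3P => Hx Hy He; rewrite vtxX vtxY /xpos /ypos !nth_index //.
by rewrite /H_edge Hx Hy He e_sym He !orbT.
Qed.

Definition on_pair (u : bool * nat) := if u.1 then u.2 < size X else u.2 < size Y.

Lemma vtx_inj : {in on_pair &, injective vtx}.
Proof.
have XY x y : x \in X -> y \in Y -> x <> y.
  by move=> Hx Hy E; move: Hy; rewrite -E (disjointFr dXY Hx).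
move=> [[] i] [[] j]; rewrite /on_pair /vtx /in_mem /= => Hi Hj.
- by move/eqP; rewrite nth_uniq // => /eqP ->.
- by move/XY; rewrite !mem_nth // => /(_ isT isT).
- by move/esym/XY; rewrite !mem_nth // => /(_ isT isT).
- by move/eqP; rewrite nth_uniq // => /eqP ->.
Qed.

Lemma vtx_mem u : on_pair u -> vtx u \in X ++ Y.
Proof.
by case: u => -[] k; rewrite /on_pair /vtx mem_cat /= => Hk; rewrite mem_nth ?orbT.
Qed.

Lemma interlacing_cross c d : chord e X Y c -> chord e X Y d ->
  interlacing X Y c d -> cross xpos ypos c d || cross xpos ypos d c.
Proof.
move=> /and3P [Hc1 Hc2 _] /and3P [Hd1 Hd2 _] /and4P [H1 H2 H3 H4].
have Hx : xpos c != xpos d by apply: contra H1 => /eqP /index_inj -> //.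
have Hy : ypos c != ypos d by apply: contra H2 => /eqP /index_inj -> //.
by move: H3 H4 Hx Hy; rewrite /cross /xpos /ypos; clear; lia.
Qed.

Definition zz_path s := map vtx (zigzag xpos ypos 0 s).

Lemma zigzag_H_path s : odd (size s) -> sorted (cross xpos ypos) s ->
  all (chord e X Y) s ->
  H_path_between e X Y xt yt (zz_path s) /\
  Posz (plen (zz_path s)) = zlen (chord_length X Y) s.
Proof.
move=> Hodd Hsort Hch.
have Hok : zz_ok xpos ypos 0 s by rewrite /zz_ok Hodd Hsort; apply/allP.
have Hb : all (bounded xpos ypos (size X) (size Y)) s.
  by apply: sub_all Hch => c /and3P [Hx Hy _]; rewrite /bounded !index_mem Hx Hy.
have Hin : {in zigzag xpos ypos 0 s, forall u, on_pair u} := zigzag_bounds Hok Hb.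
have Hne : s != [::] by apply: contraTneq Hodd => ->.
have Hsorted : sorted (relpre vtx (H_edge e X Y)) (zigzag xpos ypos 0 s).
  apply: zigzag_sorted Hok Hb _ => [k | k | c Hc]; first exact: H_edge_down_X.
    exact: H_edge_up_Y.
  exact: H_edge_chord (allP Hch c Hc).
have Hsize : (Posz (size (zigzag xpos ypos 0 s)) + Posz 0 =
               zlen (chord_length X Y) s + 1)%R by exact: zigzag_size Hok.
move: Hin Hsize (zigzag_uniq Hok) Hsorted (zigzag_last xpos ypos (true, 0) 0 Hodd).
move: (zigzag_head xpos ypos (true, 0) 0 Hne); rewrite /zz_path.
case: (zigzag xpos ypos 0 s) => [//|u tl] Hhead Hin Hsize Huniq Hsorted Hlast.
split; first split.
- apply: is_path_sorted; rewrite ?sorted_map //.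
  by rewrite map_inj_in_uniq // => v w Hv Hw; apply: vtx_inj; apply: Hin.
- split; first by apply/allP => v /mapP [w Hw ->]; apply: vtx_mem; exact: Hin.
  by move: Hhead Hlast => /= -> Hlast; rewrite last_map Hlast.
- by rewrite /plen size_map; move: Hsize; rewrite /=; lia.
Qed.

Lemma sub_zigzag_H_path cs s : sorted (cross xpos ypos) cs -> all (chord e X Y) cs ->
  subseq s cs -> odd (size s) ->
  H_path_between e X Y xt yt (zz_path s) /\
  Posz (plen (zz_path s)) = zlen (chord_length X Y) s.
Proof.
move=> Hsort Hch Hs Ho; apply: zigzag_H_path => //.
  by apply: subseq_sorted Hs Hsort; apply: cross_trans.
by apply/allP => p /(mem_subseq Hs); apply/allP.
Qed.

End ZigzagPaths.

Theorem lemma4p4 (T : finType) (e : rel T) (t D : nat)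
  (xt yt : T) (Xs Ys : seq T) (c : 'I_(3 * t) -> T * T) (a : nat) :
  1 <= t -> 1 <= D ->
  simple_graph e ->
  section_pair e (xt :: Xs) (yt :: Ys) ->
  (forall i, chord e (xt :: Xs) (yt :: Ys) (c i)) ->
  (forall i j, i != j -> interlacing (xt :: Xs) (yt :: Ys) (c i) (c j)) ->
  (forall i, a <= chord_length (xt :: Xs) (yt :: Ys) (c i) < a + D) ->
  exists P : nat -> seq T,
    (forall i, i < t -> H_path_between e (xt :: Xs) (yt :: Ys) xt yt (P i)) /\
    (forall i, i.+1 < t ->
       plen (P i) + 1 <= plen (P i.+1) <= plen (P i) + 2 * D) /\
    plen (P t.-1) >= plen (P 0) + t - 1.
Proof.
move=> Ht HD [e_sym _] [[_ uX] [[_ uY] dXY]] Hch Hint Hwin.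
have [cs [Hsort Hsize Hsub]] := sort_crossing (fun i j Hij =>
  interlacing_cross (Hch i) (Hch j) (Hint i j Hij)).
have cs_chord : all (chord e (xt :: Xs) (yt :: Ys)) cs.
  by apply/allP => p /Hsub /codomP [i ->].
have cs_win : all (in_window (chord_length (xt :: Xs) (yt :: Ys)) a D) cs.
  by apply/allP => p /Hsub /codomP [i ->]; exact: Hwin.
have cs_ne : cs != [::] by rewrite -size_eq0 Hsize card_ord; lia.
have [s0 [ch [Hg0 Hsteps Hgch Hlong]]] := long_chain cs_win cs_ne.
pose P i := zz_path xt yt Xs Ys (nth s0 (s0 :: ch) i).
have Hgood i : i <= size ch ->
    good (chord_length (xt :: Xs) (yt :: Ys)) a cs (nth s0 (s0 :: ch) i).
  by case: i => [|i] Hi //=; apply: (allP Hgch); rewrite mem_nth.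
have HP i : i <= size ch -> H_path_between e (xt :: Xs) (yt :: Ys) xt yt (P i) /\
    Posz (plen (P i)) = zlen (chord_length (xt :: Xs) (yt :: Ys)) (nth s0 (s0 :: ch) i).
  by move=> /Hgood /and3P [Hs Ho _]; exact: sub_zigzag_H_path Hsort cs_chord Hs Ho.
have Hlen : t <= (size ch).+1 by move: Hlong; rewrite Hsize card_ord; lia.
have Hstep i : i.+1 < t -> plen (P i) + 1 <= plen (P i.+1) <= plen (P i) + D + 1.
  move=> Hi; have [_ E1] := HP i ltac:(lia); have [_ E2] := HP i.+1 ltac:(lia).
  have := (pathP s0 Hsteps) i ltac:(lia).
  by rewrite /step -[nth s0 ch i]/(nth s0 (s0 :: ch) i.+1) -E1 -E2; lia.
exists P; split; [|split].
- by move=> i Hi; have [] := HP i ltac:(lia).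
- by move=> i /Hstep; lia.
- by apply: (chain_spread (f := fun i => plen (P i))) => i /Hstep; lia.
Qed.
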